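(* Let $T$ be a balanced tree with $\mathrm{height}(T)=2$. Then $T$ has two leaves at distance 4 from each other, and hence $T$ is mixed.
   Context: A leaf is a vertex of degree 1; the height of a vertex is its minimum distance to a leaf; $\mathrm{height}(T)$ is the maximum height of a vertex; $T$ is balanced if no two adjacent vertices have the same height. With $N(D)=\bigcup_{v\in D}\{u:uv\in E\}$, a TD-set is $D$ with $N(D)=V$, minimal if no proper subset is a TD-set; $T$ is mixed if not all minimal TD-sets have the same size. *)

(* A finite simple graph is a finType T with a symmetric,
   irreflexive edge relation e : rel T. *)
From mathcomp Require Import all_boot.
Set Implicit Arguments. Unset Strict Implicit. Unset Printing Implicit Defensive.

Section Graphs.
Variables (T : finType) (e : rel T).

Definition connected_graph : Prop := forall x y : T, connect e x y.

(* a cycle: x :: p with at least 3 distinct vertices, consecutive ones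
   adjacent, and the last adjacent to x *)
Definition has_cycle : Prop :=
  exists (x : T) (p : seq T),
    [/\ 2 <= size p, uniq (x :: p), path e x p & e (last x p) x].

Definition is_tree : Prop := connected_graph /\ ~ has_cycle.

Definition degree (v : T) : nat := #|[set u | e v u]|.
Definition leaf (v : T) : Prop := degree v = 1.

Definition walk_len (x y : T) (n : nat) : Prop :=
  exists p : seq T, [/\ path e x p, last x p = y & size p = n].

Definition is_dist (x y : T) (d : nat) : Prop :=
  walk_len x y d /\ forall n, walk_len x y n -> d <= n.

Definition vheight (v : T) (h : nat) : Prop :=
  (exists l, leaf l /\ is_dist v l h) /\
  (forall l d, leaf l -> is_dist v l d -> h <= d).

Definition tree_height (h : nat) : Prop :=
  (exists v, vheight v h) /\ (forall v h', vheight v h' -> h' <= h).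

Definition balanced : Prop :=
  forall u v hu hv, e u v -> vheight u hu -> vheight v hv -> hu <> hv.

(* total dominating set: N(D) = V, with N(D) the union of open neighbourhoods *)
Definition TDset (D : {set T}) : Prop :=
  forall u : T, exists2 v, v \in D & e v u.

Definition minimal_TDset (D : {set T}) : Prop :=
  TDset D /\ forall D' : {set T}, D' \proper D -> ~ TDset D'.

Definition mixed : Prop :=
  exists D1 D2 : {set T},
    [/\ minimal_TDset D1, minimal_TDset D2 & #|D1| <> #|D2|].

End Graphs.

From Stdlib Require Import Classical.
From mathcomp Require Import all_boot zify.
Set Implicit Arguments. Unset Strict Implicit. Unset Printing Implicit Defensive.

(* A vertex v of height 2 has two neighbours u1 != u2; balance forces both to
   have height 1, so they carry leaves l1, l2 and are not adjacent, whence
   l1 u1 v u2 l2 is a shortest path.  For mixedness, the set made of l1, l2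
   and all vertices outside N(u1) u N(u2) is a total dominating set: every
   vertex has a neighbour of height at most 1, and such a neighbour of u1 or
   u2 must be a leaf.  A minimal TD-set D1 inside it must contain l1 and l2,
   which are the only vertices dominating u1 and u2; replacing both by v
   gives a TD-set, and a minimal one inside it is smaller than D1. *)

Lemma ex_minn_Prop (P : nat -> Prop) n :
  P n -> exists2 d, P d & forall m, P m -> d <= m.
Proof.
elim/ltn_ind: n => n IH Pn.
case: (classic (exists2 m, m < n & P m)) => [[m lt_mn Pm] | no_less].
  exact: IH Pm.
exists n => // m Pm; rewrite leqNgt; apply/negP => lt_mn.
by apply: no_less; exists m.
Qed.

Section Graph.
Variables (T : finType) (e : rel T).

Lemma walk_len0 x : walk_len e x x 0.
Proof. by exists [::]. Qed.

Lemma walk_len_cons x y z n : e x y -> walk_len e y z n -> walk_len e x z n.+1.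
Proof. by move=> exy [p [pth lst sz]]; exists (y :: p); rewrite /= exy sz. Qed.

Lemma walk_len_dist x y n :
  walk_len e x y n -> exists2 d, is_dist e x y d & d <= n.
Proof.
move=> w; have [d wd min_d] := ex_minn_Prop w.
by exists d; [split | apply: min_d].
Qed.

Lemma vheight_le_walk x h l n :
  vheight e x h -> leaf e l -> walk_len e x l n -> h <= n.
Proof.
move=> [_ min_h] leaf_l /walk_len_dist [d dist_d le_dn].
exact: leq_trans (min_h l d leaf_l dist_d) le_dn.
Qed.

Lemma vheight_nb x y hx hy :
  e y x -> vheight e x hx -> vheight e y hy -> hy <= hx.+1.
Proof.
move=> eyx [[l [leaf_l [w _]]] _] hvy.
exact: vheight_le_walk hvy leaf_l (walk_len_cons eyx w).
Qed.

Lemma leaf_vheight x h : leaf e x -> vheight e x h -> h = 0.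
Proof.
move=> leaf_x hv; apply/eqP; rewrite -leqn0.
exact: vheight_le_walk hv leaf_x (walk_len0 x).
Qed.

Lemma vheight0_leaf x : vheight e x 0 -> leaf e x.
Proof.
move=> [[l [leaf_l [[p [_ lst /size0nil p0]] _]]] _].
by rewrite -lst p0 in leaf_l.
Qed.

Lemma vheight1_leaf_nb x : vheight e x 1 -> exists2 l, leaf e l & e x l.
Proof.
move=> [[l [leaf_l [[p [pth lst sz]] _]]] _].
case: p pth lst sz => [|y [|//]] //= /andP[exy _] yl _.
by exists l => //; rewrite -yl.
Qed.

Lemma vheight_exists l0 :
  connected_graph e -> leaf e l0 -> forall x, exists h, vheight e x h.
Proof.
move=> conn leaf_l0 x; case/connectP: (conn x l0) => p pth lst.
have [d [l leaf_l w] min_d] :=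
  @ex_minn_Prop (fun n => exists2 l, leaf e l & walk_len e x l n) (size p)
    (ex_intro2 _ _ l0 leaf_l0 (ex_intro _ p (And3 pth (esym lst) erefl))).
exists d; split.
  by exists l; split => //; split => // n wn; apply: min_d; exists l.
by move=> l' d' leaf_l' [w' _]; apply: min_d; exists l'.
Qed.

Lemma leaf_nb l : leaf e l -> exists u, e l u.
Proof.
rewrite /leaf /degree => /eqP/cards1P [u Nl]; exists u.
have : u \in [set u | e l u] by rewrite Nl set11.
by rewrite inE.
Qed.

Lemma leaf_nb_uniq l a b : leaf e l -> e l a -> e l b -> a = b.
Proof.
rewrite /leaf /degree => /eqP/cards1P [x Nl] ela elb.
have : a \in [set u | e l u] by rewrite inE.
have : b \in [set u | e l u] by rewrite inE.
by rewrite Nl !inE => /eqP -> /eqP ->.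
Qed.

Lemma connected_nb l : connected_graph e -> leaf e l -> forall w, exists y, e w y.
Proof.
move=> conn leaf_l w; case/connectP: (conn w l) => [[|y p]] /=.
  by move=> _ <-; exact: leaf_nb.
by move=> /andP[ewy _] _; exists y.
Qed.

Lemma nonleaf_other_nb v u : ~ leaf e v -> e v u -> exists2 u', e v u' & u' != u.
Proof.
move=> nleaf_v evu.
case: (pickP [pred x | e v x && (x != u)]) => [u' /andP[] | none].
  by exists u'.
case: nleaf_v; apply/eqP/cards1P; exists u; apply/setP => x; rewrite !inE.
apply/idP/eqP => [evx | -> //]; apply/eqP.
by have := none x; rewrite /= evx => /negbFE.
Qed.

Lemma TDsetP D : reflect (TDset e D) [forall u, [exists v in D, e v u]].
Proof.
apply: (iffP forallP) => [tD u | tD u].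
  by have /exists_inP[v vD evu] := tD u; exists v.
by have [v vD evu] := tD u; apply/exists_inP; exists v.
Qed.

Lemma minimal_TDset_exists D :
  TDset e D -> exists2 D', minimal_TDset e D' & D' \subset D.
Proof.
move/TDsetP => tD.
have [D' /minsetP[/TDsetP tD' min_D'] subD'] :=
  @minset_exists _ (fun X => [forall u, [exists v in X, e v u]]) D tD.
exists D' => //; split => // D'' prD'' /TDsetP tD''.
have eqD'' := min_D' D'' tD'' (proper_sub prD'').
by rewrite eqD'' properxx in prD''.
Qed.

End Graph.

Section LeafPath.
Variables (T : finType) (e : rel T) (l1 u1 v u2 l2 : T).
Hypotheses (e_sym : symmetric e) (leaf_l1 : leaf e l1) (leaf_l2 : leaf e l2).
Hypotheses (e_u1l1 : e u1 l1) (e_u2l2 : e u2 l2) (e_vu1 : e v u1) (e_vu2 : e v u2).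
Hypothesis u1_neq_u2 : u1 != u2.

Lemma leaf_l1_nb x : e l1 x -> x = u1.
Proof. by move=> el1x; apply: leaf_nb_uniq leaf_l1 el1x _; rewrite e_sym. Qed.

Lemma leaf_l2_nb x : e l2 x -> x = u2.
Proof. by move=> el2x; apply: leaf_nb_uniq leaf_l2 el2x _; rewrite e_sym. Qed.

Lemma u1_nadj_l2 : ~~ e u1 l2.
Proof.
by apply/negP; rewrite e_sym => /leaf_l2_nb eq12; move: u1_neq_u2; rewrite eq12 eqxx.
Qed.

Lemma u2_nadj_l1 : ~~ e u2 l1.
Proof.
by apply/negP; rewrite e_sym => /leaf_l1_nb eq21; move: u1_neq_u2; rewrite eq21 eqxx.
Qed.

Lemma leaf_path_dist : ~~ e u1 u2 -> is_dist e l1 l2 4.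
Proof.
move=> nadj12; split.
  by exists [:: u1; v; u2; l2]; rewrite /= e_sym e_u1l1 e_sym e_vu1 e_vu2 e_u2l2.
move=> n [p [pth lst <-]].
case: p pth lst => [|a [|b [|c [|d q]]]] //=.
- by move=> _ l12; move: u2_nadj_l1; rewrite l12 e_u2l2.
- by move=> /andP[/leaf_l1_nb -> _] u1l2; move: nadj12; rewrite u1l2 e_sym e_u2l2.
- by move=> /and3P[/leaf_l1_nb -> eu1b _] bl2; move: u1_nadj_l2; rewrite -bl2 eu1b.
move=> /and4P[/leaf_l1_nb -> eu1b ebc _] cl2.
by rewrite cl2 e_sym in ebc; move: nadj12; rewrite -(leaf_l2_nb ebc) eu1b.
Qed.

Lemma leaf_path_mixed D :
  TDset e D -> {in D, forall x, e u1 x || e u2 x -> x \in [set l1; l2]} ->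
  mixed e.
Proof.
move=> tD only_leaves.
have [D1 [tD1 min_D1] subD1] := minimal_TDset_exists tD.
have l1_D1 : l1 \in D1.
  have [x xD1 exu1] := tD1 u1.
  have := only_leaves x (subsetP subD1 x xD1); rewrite e_sym exu1 => /(_ isT).
  rewrite !inE => /orP[/eqP <- // | /eqP xl2].
  by move: u1_nadj_l2; rewrite -xl2 e_sym exu1.
have l2_D1 : l2 \in D1.
  have [x xD1 exu2] := tD1 u2.
  have := only_leaves x (subsetP subD1 x xD1); rewrite (e_sym u2) exu2 orbT => /(_ isT).
  rewrite !inE => /orP[/eqP xl1 | /eqP <- //].
  by move: u2_nadj_l1; rewrite -xl1 e_sym exu2.
pose S := v |: (D1 :\: [set l1; l2]).
have tS : TDset e S.
  move=> w; have [y yD1 eyw] := tD1 w.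
  case: (boolP (y \in [set l1; l2])) => [|y_nl]; last first.
    by exists y => //; rewrite !inE -in_set2 y_nl yD1 orbT.
  case/set2P => yl; rewrite yl in eyw; exists v; rewrite ?setU11 //.
    by rewrite (leaf_l1_nb eyw).
  by rewrite (leaf_l2_nb eyw).
have [D2 min_D2 subD2] := minimal_TDset_exists tS.
exists D1, D2; split => //.
have l12 : l1 != l2 by apply: contraNneq u2_nadj_l1 => ->.
have leaves_D1 : #|D1 :&: [set l1; l2]| = 2.
  by rewrite (setIidPr _) ?cards2 ?l12 // subUset !sub1set l1_D1 l2_D1.
have := cardsID [set l1; l2] D1; have := subset_leq_card subD2.
rewrite /S cardsU1 leaves_D1; case: (_ \notin _) => /=; lia.
Qed.

End LeafPath.

Section BalancedHeight2.
Variables (T : finType) (e : rel T).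
Hypotheses (e_sym : symmetric e) (e_conn : connected_graph e).
Hypotheses (e_bal : balanced e) (e_ht2 : tree_height e 2).

Lemma vheight_le2 x h : vheight e x h -> h <= 2.
Proof. exact: e_ht2.2. Qed.

Lemma exists_leaf : exists l, leaf e l.
Proof. by have [v [[l [leaf_l _]] _]] := e_ht2.1; exists l. Qed.

Lemma vheight_total x : exists h, vheight e x h.
Proof. by have [l leaf_l] := exists_leaf; apply: vheight_exists leaf_l x. Qed.

Lemma vheight2_nb v u : vheight e v 2 -> e v u -> vheight e u 1.
Proof.
move=> hv evu; have [h hu] := vheight_total u.
have le_h2 := vheight_le2 hu.
case: h hu le_h2 => [|[|[|//]]] hu _ //.
  have leaf_u := vheight0_leaf hu.
  by have := vheight_le_walk hv leaf_u (walk_len_cons evu (walk_len0 e u)).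
by case: (e_bal evu hv hu).
Qed.

Lemma exists_support_pair :
  exists v u1 u2, [/\ e v u1, e v u2, u1 != u2, vheight e u1 1 & vheight e u2 1].
Proof.
have [v hv] := e_ht2.1; have [l leaf_l] := exists_leaf.
have [u1 evu1] := connected_nb e_conn leaf_l v.
have nleaf_v : ~ leaf e v by move/leaf_vheight/(_ hv).
have [u2 evu2 u21] := nonleaf_other_nb nleaf_v evu1.
exists v, u1, u2; split => //; [by rewrite eq_sym | exact: vheight2_nb hv _..].
Qed.

Lemma exists_low_nb w : exists y h, [/\ e w y, vheight e y h & h <= 1].
Proof.
have [hw hvw] := vheight_total w.
have [l leaf_l] := exists_leaf.
have [y ewy] := connected_nb e_conn leaf_l w; have [hy hvy] := vheight_total y.
have le_hy2 := vheight_le2 hvy.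
case: hw hvw (vheight_le2 hvw) => [|[|[|n]]] hvw le_hw2; last by exfalso.
- by exists y, hy; split => //; apply: vheight_nb hvw hvy; rewrite e_sym.
- have [l' leaf_l' ewl'] := vheight1_leaf_nb hvw; have [h' hl'] := vheight_total l'.
  by exists l', h'; split => //; rewrite (leaf_vheight leaf_l' hl').
exists y, hy; split => //.
case: hy hvy le_hy2 => [|[|[|m]]] hvy le_hy2; [by [] | by [] | | by exfalso].
by case: (e_bal ewy hvw hvy).
Qed.

Lemma low_nb_leaf u y h :
  vheight e u 1 -> e u y -> vheight e y h -> h <= 1 -> leaf e y.
Proof.
move=> hu euy; case: h => [|[|//]] hy _; first exact: vheight0_leaf.
by case: (e_bal euy hu hy).
Qed.

Lemma TDset_off_supports u1 u2 l1 l2 :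
  vheight e u1 1 -> vheight e u2 1 -> e u1 l1 -> e u2 l2 ->
  TDset e ([set l1; l2] :|: [set x | ~~ (e u1 x || e u2 x)]).
Proof.
move=> hu1 hu2 eu1l1 eu2l2 w.
case: (eqVneq w u1) => [-> | wu1].
  by exists l1; [rewrite !inE eqxx | rewrite e_sym].
case: (eqVneq w u2) => [-> | wu2].
  by exists l2; [rewrite !inE eqxx orbT | rewrite e_sym].
have [y [h [ewy hy le_h1]]] := exists_low_nb w.
have nadj u : vheight e u 1 -> w != u -> ~~ e u y.
  move=> hu wu; apply/negP => euy; have leaf_y := low_nb_leaf hu euy hy le_h1.
  have eyw : e y w by rewrite e_sym.
  have eyu : e y u by rewrite e_sym.
  by move: wu; rewrite (leaf_nb_uniq leaf_y eyw eyu) eqxx.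
exists y; last by rewrite e_sym.
by rewrite !inE negb_or (nadj u1) ?(nadj u2) ?orbT.
Qed.

End BalancedHeight2.

Theorem theorem3p34 (T : finType) (e : rel T) :
  symmetric e -> irreflexive e -> is_tree e ->
  balanced e -> tree_height e 2 ->
  (exists l1 l2 : T, [/\ leaf e l1, leaf e l2 & is_dist e l1 l2 4]) /\
  mixed e.
Proof.
move=> e_sym _ [e_conn _] e_bal e_ht2.
have [v [u1 [u2 [evu1 evu2 u12 hu1 hu2]]]] :=
  exists_support_pair e_conn e_bal e_ht2.
have [l1 leaf_l1 eu1l1] := vheight1_leaf_nb hu1.
have [l2 leaf_l2 eu2l2] := vheight1_leaf_nb hu2.
have nadj12 : ~~ e u1 u2 by apply/negP => eu12; exact: e_bal eu12 hu1 hu2 erefl.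
split.
  by exists l1, l2; split => //;
    exact: leaf_path_dist e_sym leaf_l1 leaf_l2 eu1l1 eu2l2 evu1 evu2 u12 nadj12.
have tD := TDset_off_supports e_sym e_conn e_bal e_ht2 hu1 hu2 eu1l1 eu2l2.
apply: (leaf_path_mixed e_sym leaf_l1 leaf_l2 eu1l1 eu2l2 evu1 evu2 u12 tD).
by move=> x; rewrite !inE => /orP[// | /negPf ->].
Qed.
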